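(* Let $\varphi\colon Y\to X$ be a torus-equivariant embedding of a normal toric variety $Y$ into a smooth toric variety $X$ with no torus factors, let $L\subseteq\mathbb{Z}^n$ be the associated lattice, and let $\psi\colon L_{\mathbb{R}}\to\mathbb{Z}^n$ be the ceiling stratification with $L_{\mathbb{R}}$ given its standard cell structure. Then (i) the real torus $T_\varphi$ equals $L_{\mathbb{R}}/L$ and the cell structure on it induced from the standard cell structure of $L_{\mathbb{R}}$ coincides with the stratification of $T_\varphi$ by the toric arrangement of Hanlon–Hicks–Lazarev; and (ii) the line bundle that the Hanlon–Hicks–Lazarev construction assigns to a cell $\sigma'\subseteq L_{\mathbb{R}}/L$ is $\mathcal{O}_X(-\psi(\sigma))$, where $\sigma\subseteq L_{\mathbb{R}}$ is any cell representing $\sigma'$.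
   Context: Let $X$ be a smooth toric variety with no torus factors whose fan has $n$ rays with primitive generators $\bm u_1,\dots,\bm u_n\in N_X$, and $Y$ a normal toric variety with a torus-equivariant embedding $\varphi\colon Y\to X$, corresponding to an injective $\mathbb{Z}$-linear map $\overline\varphi\colon N_Y\to N_X$ of one-parameter-subgroup lattices with dual surjection $\overline\varphi^*\colon M_X\to M_Y$ of character lattices. Set $L=\ker\overline\varphi^*\subseteq M_X$, embedded in $\mathbb{Z}^n$ by $\nu(\bm m)=(\bm u_1\cdot\bm m,\dots,\bm u_n\cdot\bm m)$; $\mathbb{Z}^n$ is identified with the group of torus-invariant divisors of $X$ and $\mathcal{O}_X(\bm u)$ denotes the corresponding line bundle. $L_{\mathbb{R}}=L\otimes\mathbb{R}\subseteq\mathbb{R}^n$ has the standard cell structure: the polyhedral cell structure from the periodic arrangement of affine hyperplanes $\{\bm p\in L_{\mathbb{R}}:p_i=j\}$, $1\le i\le n$, $j\in\mathbb{Z}$ (equivalently $\{\bm q: \bm u_i\cdot\bm q=j\}$); it descends to a cell structure on $L_{\mathbb{R}}/L$. The ceiling stratification is $\psi(\bm p)=(\lceil p_1\rceil,\dots,\lceil p_n\rceil)$, constant on open cells. The Hanlon–Hicks–Lazarev (HHL) data: the real torus $T_\varphi$ is the kernel of the induced map $(M_X\otimes\mathbb{R})/M_X\to(M_Y\otimes\mathbb{R})/M_Y$; it is stratified by the toric arrangement of subtori cut out by the conditions $\bm u_i\cdot\bm q\in\mathbb{Z}$, $1\le i\le n$; and to each point $\bm q\in M_X\otimes\mathbb{R}$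 HHL assign the line bundle $\mathcal{O}_X\big((\lfloor-\bm u_1\cdot\bm q\rfloor,\dots,\lfloor-\bm u_n\cdot\bm q\rfloor)\big)$, which is constant on strata. *)

From HB Require Import structures.
From mathcomp Require Import all_boot all_order all_algebra generic_quotient.
From mathcomp Require Import all_classical all_reals all_analysis.
Set Implicit Arguments. Unset Strict Implicit. Unset Printing Implicit Defensive.
Import Order.TTheory GRing.Theory Num.Theory.
Local Open Scope ring_scope.
Local Open Scope classical_set_scope.
Local Open Scope quotient_scope.
Import numFieldNormedType.Exports.

(* M_X = Z^d (row vectors 'rV[int]_d), N_X = Z^d (dual).
   The rays u_1..u_n are the columns of U : 'M[int]_(d,n), so that
   nu(m) = m *m U = (u_1.m, ..., u_n.m).  The dual surjection
   phibar^* : M_X = Z^d -> M_Y = Z^k is m |-> m *m A for A : 'M[int]_(d,k)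
   (phibar : N_Y -> N_X is then A^T).  Real points of M_X (x) R are 'rV[R]_d. *)

Section Defs.
Variable R : realType.

Definition zvec m (v : 'rV[R]_m) : Prop := forall j, v 0 j \is a Num.int.

Definition torus_rel d : rel 'rV[R]_d := fun x y => `[< zvec (x - y) >].

Lemma torus_rel_refl d : reflexive (@torus_rel d).
Proof. by move=> x; apply/asboolP => j; rewrite subrr !mxE rpred0. Qed.

Lemma torus_rel_sym d : symmetric (@torus_rel d).
Proof.
move=> x y; apply/asboolP/asboolP => H j;
  by rewrite -opprB mxE rpredN; apply: H.
Qed.

Lemma torus_rel_trans d : transitive (@torus_rel d).
Proof.
move=> y x z /asboolP Hxy /asboolP Hyz; apply/asboolP => j.
have -> : x - z = (x - y) + (y - z) by rewrite addrA subrK.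
by rewrite mxE rpredD.
Qed.

Canonical torus_equiv d := EquivRel (@torus_rel d)
  (@torus_rel_refl d) (@torus_rel_sym d) (@torus_rel_trans d).

(* The real torus (M_X (x) R) / M_X = R^d / Z^d with the quotient topology. *)
Definition torus d := quotient_topology {eq_quot (@torus_equiv d)}.

Definition piT d (q : 'rV[R]_d) : torus d := \pi_(torus d) q.

Definition mxR m n (B : 'M[int]_(m, n)) : 'M[R]_(m, n) := map_mx intr B.

(* T_phi : the kernel of the induced map R^d/Z^d -> R^k/Z^k, q |-> q *m A. *)
Definition Tphi d k (A : 'M[int]_(d, k)) : set (torus d) :=
  [set t | exists q : 'rV[R]_d, piT q = t /\ zvec (q *m mxR A)].

(* L = ker phibar^* in M_X. *)
Definition inL d k (A : 'M[int]_(d, k)) (l : 'rV[int]_d) : Prop := l *m A = 0.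

(* L_R = L (x) R, realized as the real span of L inside M_X (x) R = R^d. *)
Definition LR d k (A : 'M[int]_(d, k)) : set 'rV[R]_d :=
  [set p | exists r (B : 'M[int]_(r, d)) (c : 'rV[R]_r),
     (forall i, inL A (row i B)) /\ p = c *m mxR B].

(* The open cell of the standard cell structure of L_R (hyperplanes
   {p : u_i.p = j}) containing p: the points of L_R lying in the same
   position as p with respect to every hyperplane u_i.q = j. *)
Definition cell d k n (A : 'M[int]_(d, k)) (U : 'M[int]_(d, n)) (p : 'rV[R]_d)
  : set 'rV[R]_d :=
  [set p' | LR A p' /\ forall i,
     Num.floor ((p' *m mxR U) 0 i) = Num.floor ((p *m mxR U) 0 i) /\
     Num.ceil ((p' *m mxR U) 0 i) = Num.ceil ((p *m mxR U) 0 i)].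

Definition psi d n (U : 'M[int]_(d, n)) (p : 'rV[R]_d) : 'rV[int]_n :=
  \row_i Num.ceil ((p *m mxR U) 0 i).

(* Set of indices i with u_i.q in Z, for a point of the torus (well defined
   since U is integral). *)
Definition intset d n (U : 'M[int]_(d, n)) (t : torus d) : set 'I_n :=
  [set i | ((repr t *m mxR U) 0 i) \is a Num.int].

(* Stratum of t in the stratification of T_phi by the toric arrangement of
   the subtori {u_i.q in Z}: the connected component of t in the locus of
   points of T_phi lying on exactly the same subtori as t. *)
Definition HHL_stratum d k n (A : 'M[int]_(d, k)) (U : 'M[int]_(d, n))
  (t : torus d) : set (torus d) :=
  connected_component [set t' | Tphi A t' /\ intset U t' = intset U t] t.

(* HHL line bundle at q in M_X (x) R: O_X((floor(-u_i.q))_i), as a divisor. *)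
Definition HHL_divisor d n (U : 'M[int]_(d, n)) (q : 'rV[R]_d) : 'rV[int]_n :=
  \row_i Num.floor (- (q *m mxR U) 0 i).

End Defs.

Arguments piT R {d} q.
Arguments Tphi R {d k} A _.
Arguments LR R {d k} A _.
Arguments cell R {d k n} A U p _.
Arguments psi R {d n} U p.
Arguments intset R {d n} U t _.
Arguments HHL_stratum R {d k n} A U t _.
Arguments HHL_divisor R {d n} U q.

(* O_X(D) = O_X(D') iff D - D' is principal, i.e. D - D' = div(chi^m) = nu(m). *)
Definition lin_equiv d n (U : 'M[int]_(d, n)) (D D' : 'rV[int]_n) : Prop :=
  exists m : 'rV[int]_d, D - D' = m *m U.

Definition primitive_cols d n (U : 'M[int]_(d, n)) : Prop :=
  forall i, \big[gcdz/0]_(j < d) U j i = 1.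

(* Since phi^* is surjective, a point q with q A integral can be moved by an
   integral m with m A = q A into ker A = L_R, so T_phi = L_R / L.  A cell of
   L_R is convex, so its image in the torus is connected, and it lies in one
   stratum of the toric arrangement.  Conversely, a point of that stratum lying
   in a small box around a cell is the image of a point of the cell itself;
   hence inside a stratum the image of a cell is open, and its complement, a
   union of such boxes around the other cells, is open too.  Connectedness of
   the stratum gives equality.  Part (ii) is floor (- x) = - ceil x: moving q
   by an integral z changes the divisor by the principal divisor nu(z). *)

From HB Require Import structures.
From mathcomp Require Import all_boot all_order all_algebra generic_quotient.
From mathcomp Require Import all_classical all_reals all_analysis.
From mathcomp Require Import lra zify.
Set Implicit Arguments.
Unset Strict Implicit.
Unset Printing Implicit Defensive.
Import Order.TTheory GRing.Theory Num.Theory.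
Import numFieldNormedType.Exports.
Local Open Scope ring_scope.
Local Open Scope classical_set_scope.

Section IntegerSubdivision.
Variable R : archiRealFieldType.
Implicit Types a b c x : R.

Lemma int_num_norm_lt1 x : x \is a Num.int -> `|x| < 1 -> x = 0.
Proof.
move=> /intrP [m ->]; rewrite -intr_norm ltrz1 => Hm.
by have -> : m = 0 by lia.
Qed.

Lemma not_int_between (m : int) x : m%:~R < x < (m + 1)%:~R -> x \isn't a Num.int.
Proof.
move=> /andP [lo hi]; apply/negP => /floorK xE.
by move: lo hi; rewrite -xE !ltr_int ltzD1 => lo; rewrite leNgt lo.
Qed.

Definition same_zcell a b := Num.floor a = Num.floor b /\ Num.ceil a = Num.ceil b.

Lemma same_zcellP a b : same_zcell a b <->
  if b \is a Num.int then a = b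
  else (Num.floor b)%:~R < a < (Num.floor b + 1)%:~R.
Proof.
have same_int : same_zcell a b -> (a \is a Num.int) = (b \is a Num.int).
  move=> [Hf]; rewrite !ceil_floor Hf => /addrI.
  by case: (a \is a Num.int); case: (b \is a Num.int).
case: ifPn => Hb; split.
- move=> Hab; have Ha : a \is a Num.int by rewrite (same_int Hab).
  by rewrite -(floorK Ha) -(floorK Hb) (proj1 Hab).
- by move->.
- move=> Hab; have Ha : a \isn't a Num.int by rewrite (same_int Hab).
  rewrite -(proj1 Hab) floorD1_gt andbT lt_neqAle floor_le andbT.
  by apply: contraNneq Ha => <-; rewrite intr_int.
- move=> Hab; have Hf : Num.floor a = Num.floor b.
    by apply: floor_def; case/andP: Hab => /ltW -> ->.
  by split => //; rewrite !ceil_floor Hf Hb (not_int_between Hab).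
Qed.

Lemma same_zcell_refl a : same_zcell a a.
Proof. by []. Qed.

Lemma same_zcell_sym a b : same_zcell a b -> same_zcell b a.
Proof. by move=> [Hf Hc]; split. Qed.

Lemma same_zcell_trans a b c : same_zcell a b -> same_zcell b c -> same_zcell a c.
Proof. by move=> [Hf Hc] [Hf' Hc']; split; [rewrite Hf | rewrite Hc]. Qed.

Lemma same_zcellDz a b y : same_zcell a b ->
  y \is a Num.int -> same_zcell (a + y) (b + y).
Proof. by move=> [Hf Hc] Hy; rewrite /same_zcell !floorDrz ?ceilDrz ?Hf ?Hc. Qed.

Lemma same_zcell_int a b : same_zcell a b -> (a \is a Num.int) = (b \is a Num.int).
Proof.
move/same_zcellP; case: ifPn => [Hb -> | _ /not_int_between]; first by rewrite Hb.
exact: negbTE.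
Qed.

Lemma same_zcell_itv a b : same_zcell a b ->
  (Num.ceil b - 1)%:~R < a < (Num.floor b + 1)%:~R.
Proof.
move/same_zcellP; rewrite ceil_floor; case: ifPn => Hb; last by rewrite addrK.
move=> ->; have := floorK Hb; rewrite addr0 intrB intrD; lra.
Qed.

Lemma itv_same_zcell a b :
  (Num.ceil b - 1)%:~R < a < (Num.floor b + 1)%:~R ->
  (a \is a Num.int) = (b \is a Num.int) -> same_zcell a b.
Proof.
rewrite ceil_floor => Hab Hint; apply/same_zcellP; move: Hab.
case: ifPn Hint => Hb Hint; last by rewrite addrK.
rewrite addr0 intrB intrD => Hab; apply/eqP; rewrite -subr_eq0; apply/eqP.
apply: int_num_norm_lt1; first by rewrite rpredB ?Hint.
have := floorK Hb; rewrite ltr_norml; lra.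
Qed.

Lemma same_zcell_segment a b c s : 0 <= s <= 1 ->
  same_zcell a c -> same_zcell b c -> same_zcell (a + s * (b - a)) c.
Proof.
move=> /andP [s0 s1] /same_zcellP Ha /same_zcellP Hb; apply/same_zcellP.
case: ifPn Ha Hb => _; first by move=> -> ->; rewrite subrr mulr0 addr0.
move=> /andP [a1 a2] /andP [b1 b2].
by have [ab|ba] := leP a b; apply/andP; split; nra.
Qed.

Lemma floorN_shift_ceil a b (m : int) : Num.ceil a = Num.ceil b ->
  Num.floor (- (a + m%:~R)) + Num.ceil b = - m.
Proof.
move=> ab; rewrite opprD floorDrz ?rpredN ?intr_int // floorNceil opprK ab.
by rewrite -rmorphN intrKfloor addrAC addNr add0r.
Qed.

End IntegerSubdivision.

Section IntegerMatrices.
Variable R : realType.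

Lemma mxR_inj m n : injective (@mxR R m n).
Proof.
move=> M N /matrixP MN; apply/matrixP => i j.
by have := MN i j; rewrite !mxE => /eqP; rewrite eqr_int => /eqP.
Qed.

Lemma mxRM m n p (M : 'M[int]_(m, n)) (N : 'M[int]_(n, p)) :
  mxR R (M *m N) = mxR R M *m mxR R N.
Proof. exact: map_mxM. Qed.

Lemma zvec_mxR m (z : 'rV[int]_m) : zvec (mxR R z).
Proof. by move=> j; rewrite mxE intr_int. Qed.

Lemma zvecP m (v : 'rV[R]_m) : zvec v <-> exists z, v = mxR R z.
Proof.
split=> [Hv | [z ->]]; last exact: zvec_mxR.
exists (\row_j Num.floor (v 0 j)).
by apply/rowP => j; rewrite !mxE floorK.
Qed.

Lemma zvecD m (u v : 'rV[R]_m) : zvec u -> zvec v -> zvec (u + v).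
Proof. by move=> Hu Hv j; rewrite mxE rpredD. Qed.

Lemma mxR_ratr m n (M : 'M[int]_(m, n)) :
  mxR R M = map_mx ratr (map_mx (intr : int -> rat) M).
Proof. by apply/matrixP => i j; rewrite !mxE ratr_int. Qed.

Lemma scale_rat_mx_int m n (K : 'M[rat]_(m, n)) :
  exists2 D : rat, D != 0 & exists B : 'M[int]_(m, n), map_mx intr B = D *: K.
Proof.
pose D : rat := \prod_(ij : 'I_m * 'I_n) (denq (K ij.1 ij.2))%:~R.
exists D; first by apply/prodf_neq0 => ij _; rewrite intr_eq0 denq_neq0.
have DK_int i j : D * K i j \is a Num.int.
  rewrite /D (bigD1 (i, j)) //= mulrC mulrA -numqE.
  by rewrite rpredM ?intr_int ?rpred_prod // => ij _; rewrite intr_int.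
exists (\matrix_(i, j) Num.floor (D * K i j)).
by apply/matrixP => i j; rewrite !mxE floorK.
Qed.

Lemma int_kernel_basis d k (A : 'M[int]_(d, k)) :
  exists2 B : 'M[int]_d, B *m A = 0 & (kermx (mxR R A) <= mxR R B)%MS.
Proof.
pose K := kermx (map_mx (intr : int -> rat) A).
have [D D0 [B BK]] := scale_rat_mx_int K.
have BR : mxR R B = ratr D *: map_mx ratr K by rewrite mxR_ratr BK map_mxZ.
exists B.
  apply: mxR_inj; rewrite mxRM BR -scalemxAl mxR_ratr -map_mxM mulmx_ker.
  by rewrite map_mx0 scaler0 /mxR map_mx0.
rewrite mxR_ratr -map_kermx -/K.
have -> : map_mx ratr K = (ratr D)^-1 *: mxR R B.
  by rewrite BR scalerA mulVf ?scale1r // fmorph_eq0.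
exact: scalemx_sub.
Qed.

Lemma LRP d k (A : 'M[int]_(d, k)) (p : 'rV[R]_d) :
  LR R A p <-> p *m mxR R A = 0.
Proof.
split=> [[r [B [c [BA ->]]]] | pA].
  have BA0 : B *m A = 0 by apply/row_matrixP => i; rewrite row_mul row0; apply: BA.
  by rewrite -mulmxA -mxRM BA0 /mxR map_mx0 mulmx0.
have [B BA kerB] := int_kernel_basis A.
have /submxP [c ->] : (p <= mxR R B)%MS.
  by apply: submx_trans kerB; apply/sub_kermxP.
exists d, B, c; split=> // i.
by rewrite /inL -row_mul BA row0.
Qed.

End IntegerMatrices.

Section Torus.
Variables (R : realType) (d : nat).
Implicit Types (x y : 'rV[R]_d) (z : 'rV[int]_d).

Lemma piT_eqP x y : piT R x = piT R y <-> zvec (x - y).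
Proof. by split=> [/eqquotP/asboolP | Hxy]; last by apply/eqquotP/asboolP. Qed.

Lemma piTDz x z : piT R (x + mxR R z) = piT R x.
Proof. by apply/piT_eqP; rewrite addrAC subrr add0r; apply: zvec_mxR. Qed.

Lemma piT_eq_shift x y : piT R x = piT R y -> exists z, x = y + mxR R z.
Proof. by move/piT_eqP/zvecP => [z xy]; exists z; rewrite -xy addrC subrK. Qed.

Lemma open_piT_image (W : set 'rV[R]_d) : open W -> open (piT R @` W).
Proof.
move=> oW; rewrite /open /= /quotient_open openE => y [x Wx /piT_eq_shift [z xy]].
have Wyz : nbhs (y + mxR R z) W by rewrite -xy; apply: open_nbhs_nbhs.
have shift_cont : continuous (fun y' : 'rV[R]_d => y' + mxR R z).
  by move=> y'; apply: continuousD; [exact: cvg_id | exact: cst_continuous].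
rewrite /interior; apply: (@filterS _ (nbhs y) _ _ _ _ (shift_cont y W Wyz)) => y' Wy'.
by exists (y' + mxR R z) => //; rewrite piTDz.
Qed.

Lemma coord_mulmx_continuous n (M : 'M[R]_(d, n)) i :
  continuous (fun x => (x *m M) 0 i).
Proof.
have -> : (fun x => (x *m M) 0 i) = (fun x => \sum_j x 0 j * M j i).
  by apply: funext => x; rewrite mxE.
apply: (@continuous_big R _ +%R 0 predT); first exact: add_continuous.
move=> j _ x; apply: continuousM; [exact: coord_continuous | exact: cst_continuous].
Qed.

Lemma open_mulmx_box n (M : 'M[R]_(d, n)) (lo hi : 'I_n -> R) :
  open [set x : 'rV[R]_d | forall i, lo i < (x *m M) 0 i < hi i].
Proof.
rewrite openE => x Mx; rewrite /interior.
apply: (@filter_forall _ _ _ _ (nbhs_filter x)) => i.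
have Mxi : ((x *m M) 0 i \in `]lo i, hi i[)%R by rewrite in_itv; apply: Mx.
exact: (@coord_mulmx_continuous n M i x _ (near_in_itvoo Mxi)).
Qed.

End Torus.

Section Cells.
Variables (R : realType) (d k n : nat) (U : 'M[int]_(d, n)) (A : 'M[int]_(d, k)).
Implicit Types (p c x y : 'rV[R]_d) (t : torus R d).

Local Notation udot i x := ((x *m mxR R U) 0 i).

Definition HHL_locus t0 : set (torus R d) :=
  [set t | Tphi R A t /\ intset R U t = intset R U t0].

(* The bound on x A forces an integral x A to vanish, i.e. puts x in L_R. *)
Definition cell_box c : set 'rV[R]_d :=
  [set x | (forall j, -1 < (x *m mxR R A) 0 j < 1) /\
           (forall i, (Num.ceil (udot i c) - 1)%:~R < udot i x
                      < (Num.floor (udot i c) + 1)%:~R)].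

Lemma udotDz x (z : 'rV[int]_d) i :
  udot i (x + mxR R z) = udot i x + ((z *m U) 0 i)%:~R.
Proof. by rewrite mulmxDl -mxRM !mxE. Qed.

Lemma intset_piT x i : intset R U (piT R x) i <-> udot i x \is a Num.int.
Proof.
rewrite /intset /=; have [z ->] := piT_eq_shift (reprK (piT R x)).
by rewrite udotDz rpredDr ?intr_int.
Qed.

Lemma intset_piT_eqP x y : intset R U (piT R x) = intset R U (piT R y) <->
  forall i, (udot i x \is a Num.int) = (udot i y \is a Num.int).
Proof.
split=> [xy i | xy].
  by apply/idP/idP => /intset_piT; [rewrite xy | rewrite -xy] => /intset_piT.
by apply/seteqP; split=> i /intset_piT; [rewrite xy | rewrite -xy] => /intset_piT.
Qed.

Lemma Tphi_piT_LR p : LR R A p -> Tphi R A (piT R p).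
Proof. by move=> /LRP pA; exists p; split=> // j; rewrite pA mxE rpred0. Qed.

Lemma cell_refl p : LR R A p -> cell R A U p p.
Proof. by split=> // i; apply: same_zcell_refl. Qed.

Lemma open_cell_box c : open (cell_box c).
Proof. by apply: openI; apply: open_mulmx_box. Qed.

Lemma cell_sub_box c : cell R A U c `<=` cell_box c.
Proof.
move=> x [/LRP xA xc]; split=> [j | i]; first by rewrite xA mxE; lra.
exact: same_zcell_itv (xc i).
Qed.

Lemma box_sub_cell c x : cell_box c x -> Tphi R A (piT R x) ->
  intset R U (piT R x) = intset R U (piT R c) -> cell R A U c x.
Proof.
move=> [xA1 xc] [q [/esym/piT_eq_shift [z xq] qA]] /intset_piT_eqP xc_int.
have xA_int : zvec (x *m mxR R A).
  by rewrite xq mulmxDl -mxRM; apply: zvecD qA _; apply: zvec_mxR.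
split=> [| i]; last exact: itv_same_zcell (xc i) (xc_int i).
apply/LRP/matrixP => i j; rewrite ord1 [RHS]mxE.
by apply: int_num_norm_lt1 (xA_int j) _; rewrite ltr_norml; apply: xA1.
Qed.

Lemma cell_in_locus p c : cell R A U p c -> HHL_locus (piT R p) (piT R c).
Proof.
move=> [cL cp]; split; first exact: Tphi_piT_LR.
by apply/intset_piT_eqP => i; apply: same_zcell_int.
Qed.

Lemma cell_segment p c s : LR R A p -> cell R A U p c -> 0 <= s <= 1 ->
  cell R A U p (p + s *: (c - p)).
Proof.
move=> /LRP pA [/LRP cA cp] s01; split.
  by apply/LRP; rewrite mulmxDl -scalemxAl mulmxBl pA cA subrr scaler0 addr0.
move=> i; change (same_zcell (udot i (p + s *: (c - p))) (udot i p)).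
have -> : udot i (p + s *: (c - p)) = udot i p + s * (udot i c - udot i p).
  by rewrite mulmxDl -scalemxAl mulmxBl !mxE.
exact: same_zcell_segment (same_zcell_refl _) (cp i).
Qed.

Lemma cell_piT_meet p c x y : cell R A U p x -> LR R A c -> cell R A U c y ->
  piT R x = piT R y -> (piT R @` cell R A U p) (piT R c).
Proof.
move=> [xL xp] cL [yL yc] /piT_eq_shift [z xy].
exists (c + mxR R z); last exact: piTDz.
split=> [| i].
  have -> : c + mxR R z = c + x - y by rewrite xy addrA addrAC addrK.
  apply/LRP; move: xL yL cL => /LRP xA /LRP yA /LRP cA.
  by rewrite !mulmxDl mulNmx xA yA cA oppr0 !addr0.
change (same_zcell (udot i (c + mxR R z)) (udot i p)).
apply: same_zcell_trans (xp i); rewrite udotDz xy udotDz.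
apply: same_zcellDz; last exact: intr_int.
exact: same_zcell_sym (yc i).
Qed.

Lemma piT_LR_eq p p' : LR R A p -> LR R A p' ->
  piT R p = piT R p' <-> exists l : 'rV[int]_d, inL A l /\ p - p' = mxR R l.
Proof.
move=> /LRP pA /LRP p'A; split=> [/piT_eqP/zvecP [l pp'] | [l [_ pp']]]; last first.
  by apply/piT_eqP; rewrite pp'; apply: zvec_mxR.
exists l; split=> //; apply: (@mxR_inj R).
by rewrite mxRM -pp' mulmxBl pA p'A subrr /mxR map_mx0.
Qed.

Lemma HHL_divisor_cell p q : (piT R @` cell R A U p) (piT R q) ->
  lin_equiv U (HHL_divisor R U q) (- psi R U p).
Proof.
move=> [c [_ cp] /esym/piT_eq_shift [z qc]].
exists (- z); apply/rowP => i.
have -> : (HHL_divisor R U q - - psi R U p) 0 i =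
          Num.floor (- udot i q) + Num.ceil (udot i p) by rewrite !mxE opprK.
rewrite mulNmx [RHS]mxE qc udotDz.
exact: floorN_shift_ceil (proj2 (cp i)).
Qed.

Lemma piT_cell_sub_stratum p : LR R A p ->
  piT R @` cell R A U p `<=` HHL_stratum R A U (piT R p).
Proof.
move=> pL _ [c pc <-].
pose h s := piT R (p + s *: (c - p)).
have h_cont : continuous h.
  move=> s; apply: continuous_comp; last exact: pi_continuous.
  apply: continuousD; first exact: cst_continuous.
  by apply: continuousZ; [exact: cvg_id | exact: cst_continuous].
have seg_conn : connected (h @` `[0, 1]).
  apply: connected_continuous_connected; first exact: segment_connected.
  exact: continuous_subspaceT.
apply: (connected_component_max _ _ seg_conn).
- exists 0; first by rewrite /= in_itv /= lexx ler01.
  by rewrite /h scale0r addr0.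
- move=> _ [s s01 <-]; apply: cell_in_locus; apply: cell_segment => //.
- exists 1; first by rewrite /= in_itv /= lexx ler01.
  by rewrite /h scale1r addrC subrK.
Qed.

Lemma locus_cellI_box p K : K `<=` HHL_locus (piT R p) ->
  K `&` (piT R @` cell R A U p) = K `&` (piT R @` cell_box p).
Proof.
move=> Kloc; apply/seteqP; split=> u [Ku [x xc xu]]; split=> //; exists x => //.
  exact: cell_sub_box.
have [xT xint] := Kloc _ Ku; rewrite -xu in xT xint.
exact: box_sub_cell.
Qed.

Definition other_cell_boxes p : set (torus R d) :=
  \bigcup_(c in [set c | [/\ LR R A c, HHL_locus (piT R p) (piT R c)
                          & ~ (piT R @` cell R A U p) (piT R c)]])
    piT R @` cell_box c.

Hypothesis Asurj : forall y : 'rV[int]_k, exists m : 'rV[int]_d, m *m A = y.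

Lemma piT_LR : piT R @` LR R A = Tphi R A.
Proof.
apply/seteqP; split=> [_ [p pL <-] | t [q [<- /zvecP [y qA]]]].
  exact: Tphi_piT_LR.
have [m mA] := Asurj y.
exists (q - mxR R m); last by rewrite -map_mxN piTDz.
by apply/LRP; rewrite mulmxBl -mxRM mA qA subrr.
Qed.

Lemma locus_cellI_other_boxes p K : K `<=` HHL_locus (piT R p) ->
  K `&` (piT R @` cell R A U p) = K `&` ~` other_cell_boxes p.
Proof.
move=> Kloc; apply/seteqP; split=> u [Ku uC]; split=> //.
  case: uC Ku => x px <- Ku [c [cL [_ cint] not_pc] [y yc yx]]; apply: not_pc.
  have [xT xint] := Kloc _ Ku.
  apply: (cell_piT_meet px cL _ (esym yx)); apply: box_sub_cell yc _ _.
    by rewrite yx.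
  by rewrite yx xint cint.
apply: contrapT => not_pc; apply: uC.
have [uT uint] := Kloc _ Ku.
move: uT; rewrite -piT_LR => -[c cL cu].
exists c; first by split=> //; rewrite cu //; apply: Kloc.
by exists c => //; apply/cell_sub_box/cell_refl.
Qed.

Lemma stratum_sub_piT_cell p : LR R A p ->
  HHL_stratum R A U (piT R p) `<=` piT R @` cell R A U p.
Proof.
move=> pL; set K := HHL_stratum R A U (piT R p).
have Kloc : K `<=` HHL_locus (piT R p) := @connected_component_sub _ _ _.
suff <- : K `&` (piT R @` cell R A U p) = K by move=> t [].
apply: component_connected.
- exists (piT R p); split; last by exists p => //; apply: cell_refl.
  exact/connected_component_refl/cell_in_locus/cell_refl.
- exists (piT R @` cell_box p); last exact: locus_cellI_box.
  exact/open_piT_image/open_cell_box.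
- exists (~` other_cell_boxes p); last exact: locus_cellI_other_boxes.
  apply: open_closedC; apply: bigcup_open => c _.
  exact/open_piT_image/open_cell_box.
Qed.

End Cells.

Theorem lemma4p1 (R : realType) (d k n : nat)
  (U : 'M[int]_(d, n)) (A : 'M[int]_(d, k))
  (* the rays u_i (columns of U) are primitive and pairwise distinct *)
  (Uprim : primitive_cols U)
  (Udist : injective (fun i : 'I_n => col i U))
  (* X has no torus factors: the rays span N_X (x) R *)
  (Uspan : row_full (mxR R U)^T)
  (* phibar^* : M_X -> M_Y is surjective *)
  (Asurj : forall y : 'rV[int]_k, exists m : 'rV[int]_d, m *m A = y) :
  (* (i) T_phi = L_R / L via the natural map *)
  [/\ piT R @` LR R A = Tphi R A,
      (forall p p' : 'rV[R]_d, LR R A p -> LR R A p' ->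
         piT R p = piT R p' <-> exists l : 'rV[int]_d, inL A l /\ p - p' = mxR R l),
  (* the induced cell structure coincides with the HHL stratification *)
      (forall p : 'rV[R]_d, LR R A p ->
         piT R @` cell R A U p = HHL_stratum R A U (piT R p)) &
  (* (ii) the HHL line bundle on the image of the cell sigma of p is O_X(-psi(sigma)) *)
      (forall (p q : 'rV[R]_d), LR R A p -> (piT R @` cell R A U p) (piT R q) ->
         lin_equiv U (HHL_divisor R U q) (- psi R U p))].
Proof.
split.
- exact: piT_LR.
- exact: piT_LR_eq.
- move=> p pL; apply/seteqP; split.
    exact: piT_cell_sub_stratum.
  exact: stratum_sub_piT_cell.
- by move=> p q _; apply: HHL_divisor_cell.
Qed.
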